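(* Let $n\ge1$ and $\alpha,\beta,u,v\in V_n$. If the Wang tile $(\alpha,\beta,u,v)$ (right $\alpha$, top $\beta$, left $u$, bottom $v$) belongs to $\mathcal T'_n$, then there exists a unique valid rectangular pattern with tiles in $\mathcal T'_n$ whose right, top, left and bottom labels are respectively $\tau_n(\alpha)$, $\tau_n(\beta)$, $\tau_n(u)$ and $\tau_n(v)$.
   Context: Write $\bar m=m+1$. $V_n=\{(v_0,v_1,v_2)\in\mathbb{Z}^3: 0\le v_0\le v_1\le 1,\ v_1\le v_2\le n+1\}$, elements written as words $v_0v_1v_2$. A Wang tile is $t=(a,b,c,d)$ with $\mathrm{RIGHT}(t)=a$, $\mathrm{TOP}(t)=b$, $\mathrm{LEFT}(t)=c$, $\mathrm{BOTTOM}(t)=d$; $\hat t=(b,a,d,c)$, $\hat S=\{\hat t:t\in S\}$. Define (as (right, top, left, bottom)): $W_n=\{(11(i+1),11(j+1),11i,11j):1\le i,j\le n\}$; $B'_n=\{(00(i+1),111,00i,11n):0\le i\le n\}$; $G_n=\{(01(i+1),111,00i,11(n+1)):0\le i\le n\}$; $Y_n=\{(01(i+1),112,01i,11(n+1)):1\le i\le n\}$; $A_n=\{(00(i+1),112,01i,11n):1\le i\le n\}$; $J'_n=\{((0,k,l),(0,r,s),(0,s,r+n),(0,l,k+n)):(k,l),(r,s)\in\{(0,0),(0,1),(1,1)\}\}$. $\mathcal T'_n=W_n\cup B'_n\cup G_n\cup Y_n\cup A_n\cup\hat B'_n\cup\hat G_n\cup\hat Y_n\cup\hat A_n\cup J'_n$.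 A rectangular pattern is valid if adjacent tiles agree on common edges; its bottom (top) labels are those of its bottom (top) row read left to right, its left (right) labels those of its left (right) column read bottom to top. $\tau_n:V_n\to V_n^*$ is $\tau_n(xyz)=(0,x-y+1,n)\cdot(11n)^{z-x-1}\cdot(11\bar n)^{n+1-z}$ if $x\ne z$, and $\tau_n(xyz)=(0,x-y+1,n+1)\cdot(11\bar n)^{n-z}$ if $x=z$. *)

From mathcomp Require Import all_boot.
Set Implicit Arguments. Unset Strict Implicit. Unset Printing Implicit Defensive.

(* A label v0v1v2 in Z^3; all labels in V_n are nonnegative, so we use nat. *)
Definition label : Type := (nat * nat * nat)%type.
Definition lab (a b c : nat) : label := (a, b, c).

Definition inV (n : nat) (l : label) : Prop :=
  let: (v0, v1, v2) := l in [/\ v0 <= v1, v1 <= 1, v1 <= v2 & v2 <= n.+1].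

Definition tile : Type := (label * label * label * label)%type.
Definition RIGHT (t : tile) : label := t.1.1.1.
Definition TOP (t : tile) : label := t.1.1.2.
Definition LEFT (t : tile) : label := t.1.2.
Definition BOTTOM (t : tile) : label := t.2.
Definition mktile (a b c d : label) : tile := (a, b, c, d).

Definition hat (t : tile) : tile := mktile (TOP t) (RIGHT t) (BOTTOM t) (LEFT t).

Definition inW (n : nat) (t : tile) : Prop :=
  exists i j, [/\ 1 <= i <= n, 1 <= j <= n &
    t = mktile (lab 1 1 i.+1) (lab 1 1 j.+1) (lab 1 1 i) (lab 1 1 j)].
Definition inB' (n : nat) (t : tile) : Prop :=
  exists i, i <= n /\ t = mktile (lab 0 0 i.+1) (lab 1 1 1) (lab 0 0 i) (lab 1 1 n).
Definition inG (n : nat) (t : tile) : Prop :=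
  exists i, i <= n /\ t = mktile (lab 0 1 i.+1) (lab 1 1 1) (lab 0 0 i) (lab 1 1 n.+1).
Definition inY (n : nat) (t : tile) : Prop :=
  exists i, 1 <= i <= n /\ t = mktile (lab 0 1 i.+1) (lab 1 1 2) (lab 0 1 i) (lab 1 1 n.+1).
Definition inA (n : nat) (t : tile) : Prop :=
  exists i, 1 <= i <= n /\ t = mktile (lab 0 0 i.+1) (lab 1 1 2) (lab 0 1 i) (lab 1 1 n).

Definition okpair (k l : nat) : Prop :=
  (k, l) = (0, 0) \/ (k, l) = (0, 1) \/ (k, l) = (1, 1).
Definition inJ' (n : nat) (t : tile) : Prop :=
  exists k l r s, [/\ okpair k l, okpair r s &
    t = mktile (lab 0 k l) (lab 0 r s) (lab 0 s (r + n)) (lab 0 l (k + n))].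

Definition inHat (S : tile -> Prop) (t : tile) : Prop := exists t', S t' /\ t = hat t'.

Definition inT' (n : nat) (t : tile) : Prop :=
  inW n t \/ inB' n t \/ inG n t \/ inY n t \/ inA n t \/
  inHat (inB' n) t \/ inHat (inG n) t \/ inHat (inY n) t \/ inHat (inA n) t \/
  inJ' n t.

(* tau_n : V_n -> V_n^*.  For labels in V_n we have x <= y <= x+1 and x <= z,
   so the natural-number expressions 1 + x - y, z - x - 1, n + 1 - z, n - z
   agree with the integer ones. *)
Definition tau (n : nat) (l : label) : seq label :=
  let: (x, y, z) := l in
  if x != z then
    lab 0 (1 + x - y) n :: nseq (z - x - 1) (lab 1 1 n) ++ nseq (n.+1 - z) (lab 1 1 n.+1)
  else lab 0 (1 + x - y) n.+1 :: nseq (n - z) (lab 1 1 n.+1).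

(* A rectangular pattern of width w and height h: p i j is the tile in
   column i (0 <= i < w, left to right) and row j (0 <= j < h, bottom to top). *)
Definition pattern : Type := nat -> nat -> tile.

Definition valid_pattern (w h : nat) (p : pattern) : Prop :=
  (forall i j, i.+1 < w -> j < h -> RIGHT (p i j) = LEFT (p i.+1 j)) /\
  (forall i j, i < w -> j.+1 < h -> TOP (p i j) = BOTTOM (p i j.+1)).

Definition tiles_in (S : tile -> Prop) (w h : nat) (p : pattern) : Prop :=
  forall i j, i < w -> j < h -> S (p i j).

Definition bottom_labels (w h : nat) (p : pattern) : seq label :=
  [seq BOTTOM (p i 0) | i <- iota 0 w].
Definition top_labels (w h : nat) (p : pattern) : seq label :=
  [seq TOP (p i h.-1) | i <- iota 0 w].
Definition left_labels (w h : nat) (p : pattern) : seq label :=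
  [seq LEFT (p 0 j) | j <- iota 0 h].
Definition right_labels (w h : nat) (p : pattern) : seq label :=
  [seq RIGHT (p w.-1 j) | j <- iota 0 h].

Definition good_pattern (n : nat) (R T L B : seq label) (w h : nat) (p : pattern) : Prop :=
  [/\ valid_pattern w h p, tiles_in (inT' n) w h p,
      right_labels w h p = R, top_labels w h p = T &
      left_labels w h p = L /\ bottom_labels w h p = B].

From mathcomp Require Import all_boot zify.

(* The pattern is explicit: along its first row and first column the edge labels
   are the letters of tau v and tau u, and inside it they are counters increasing
   by one from tile to tile, so that the inner tiles are W tiles.  A tile of T'_n
   is determined by its left and bottom labels, hence a valid pattern is
   determined by its left and bottom boundaries, which gives uniqueness.  For
   existence, a check over the families of T'_n shows that the right boundary of
   the explicit pattern is tau alpha.  Transposing the pattern corresponds to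
   taking the hat of the tile, so the top boundary is tau beta as well, and the
   counters reaching the boundary at most n + 1 keeps the inner tiles in W. *)

Set Implicit Arguments.
Unset Strict Implicit.
Unset Printing Implicit Defensive.

Definition tau_flag (l : label) : nat := let: (x, y, _) := l in 1 + x - y.

Definition tau_carry (l : label) (i : nat) : nat := let: (x, _, z) := l in z <= x + i.

Definition tau_letter (n : nat) (l : label) (i : nat) : label :=
  if i is 0 then lab 0 (tau_flag l) (n + tau_carry l 0) else lab 1 1 (n + tau_carry l i).

Lemma tauE n l : 0 < n -> inV n l -> tau n l = mkseq (tau_letter n l) (n.+1 - l.1.1).
Proof.
case: l => [[x y] z] n_gt0 [xy y1 yz zn] /=.
have size_tau : size (tau n (x, y, z)) = n.+1 - x.
  by rewrite /tau; case: eqP => /= *; rewrite ?size_cat !size_nseq; lia.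
apply: (@eq_from_nth _ (lab 0 0 0)) => [|i]; rewrite size_tau ?size_mkseq // => lt_i.
rewrite nth_mkseq // /tau_letter /tau; case: eqP => [<-|x_neq_z] /=; case: i lt_i => [|i] lt_i /=;
  rewrite ?nth_cat ?size_nseq ?nth_nseq; repeat case: ifP => //=; move=> *; f_equal; lia.
Qed.

Lemma mem_tau_le n a l : l \in tau n a -> l.2 <= n.+1.
Proof.
case: a => [[x y] z]; rewrite /tau; case: ifP => _; rewrite inE ?mem_cat !mem_nseq.
- by case/or3P => [/eqP -> | /andP [_ /eqP ->] | /andP [_ /eqP ->]] /=.
- by case/orP => [/eqP -> | /andP [_ /eqP ->]] /=.
Qed.

Lemma okpairE k l : okpair k l <-> k <= l <= 1.
Proof.
split; first by case=> [[-> ->]|[[-> ->]|[-> ->]]].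
move=> /andP [kl l1]; rewrite /okpair.
by case: l l1 kl => [|[|l]] // _; case: k => [|[|k]] // _; auto.
Qed.

Lemma hatK : involutive hat.
Proof. by case=> [[[a b] c] d]. Qed.

Lemma inT'_hat n t : inT' n t -> inT' n (hat t).
Proof.
case=> [[i [j [hi hj ->]]]|[Bt|[Gt|[Yt|[At|[[t' [Bt' ->]]|[[t' [Gt' ->]]|
  [[t' [Yt' ->]]|[[t' [At' ->]]|[k [l [r [s [kl rs ->]]]]]]]]]]]]]].
- by left; exists j, i.
- by do 5 right; left; exists t.
- by do 6 right; left; exists t.
- by do 7 right; left; exists t.
- by do 8 right; left; exists t.
- by right; left; rewrite hatK.
- by do 2 right; left; rewrite hatK.
- by do 3 right; left; rewrite hatK.
- by do 4 right; left; rewrite hatK.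
- by do 9 right; exists r, s, k, l.
Qed.

Lemma inT'_row_tile n (t t' : bool) c : c <= n -> (t -> 0 < c) ->
  inT' n (mktile (lab 0 t' c.+1) (lab 1 1 t.+1) (lab 0 t c) (lab 1 1 (n + t'))).
Proof.
case: t; case: t' => c_le c_gt0; rewrite ?addn0 ?addn1.
- by do 3 right; left; exists c; rewrite c_gt0.
- by do 4 right; left; exists c; rewrite c_gt0.
- by do 2 right; left; exists c.
- by right; left; exists c.
Qed.

Ltac case_inT' :=
  case=> [[? [? [? ? ->]]]|[[? [? ->]]|[[? [? ->]]|[[? [? ->]]|[[? [? ->]]|
    [[? [[? [? ->]] ->]]|[[? [[? [? ->]] ->]]|[[? [[? [? ->]] ->]]|[[? [[? [? ->]] ->]]|
    [? [? [? [? [[[-> ->]|[[-> ->]|[-> ->]]] [[-> ->]|[[-> ->]|[-> ->]]] ->]]]]]]]]]]]]]].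

Definition deterministic (S : tile -> Prop) : Prop :=
  forall t1 t2, S t1 -> S t2 -> LEFT t1 = LEFT t2 -> BOTTOM t1 = BOTTOM t2 -> t1 = t2.

Lemma deterministic_inT' n : deterministic (inT' n).
Proof.
move=> t1 t2; case_inT'; case_inT'; rewrite /LEFT /BOTTOM /= => E1 E2;
  try discriminate; (try injection E1); (try injection E2); intros; subst; by [|lia].
Qed.

Lemma valid_pattern_eq S w h p q i j : deterministic S ->
  valid_pattern w h p -> valid_pattern w h q -> tiles_in S w h p -> tiles_in S w h q ->
  left_labels w h p = left_labels w h q -> bottom_labels w h p = bottom_labels w h q ->
  i < w -> j < h -> p i j = q i j.
Proof.
move=> detS [pR pT] [qR qT] pS qS /eq_in_map EL /eq_in_map EB.
elim: j i => [|j IHj] i; elim: i => [|i IHi] lt_i lt_j;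
  apply: (detS _ _ (pS _ _ lt_i lt_j) (qS _ _ lt_i lt_j)).
all: try by [apply: EL; rewrite mem_iota | apply: EB; rewrite mem_iota].
all: try by rewrite -pR -?qR ?IHi // ltnW.
all: by rewrite -pT -?qT ?IHj // ltnW.
Qed.

Lemma good_pattern_unique n R T L B w h p w' h' p' :
  good_pattern n R T L B w h p -> good_pattern n R T L B w' h' p' ->
  [/\ w' = w, h' = h & forall i j, i < w -> j < h -> p' i j = p i j].
Proof.
case=> pV pS _ _ [pL pB] [qV qS _ _ [qL qB]].
have w'_eq : w' = w by have := congr1 size (etrans qB (esym pB)); rewrite !size_map !size_iota.
have h'_eq : h' = h by have := congr1 size (etrans qL (esym pL)); rewrite !size_map !size_iota.
subst w' h'; split=> // i j lt_i lt_j.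
by apply: valid_pattern_eq (@deterministic_inT' n) qV pV qS pS _ _ lt_i lt_j; rewrite ?qL ?qB.
Qed.

(* [edge n u v i j] labels the left side of the tile in column [i] and row [j];
   by symmetry the bottom side of that tile carries [edge n v u j i]. *)
Definition edge (n : nat) (u v : label) (i j : nat) : label :=
  match i, j with
  | 0, _ => tau_letter n u j
  | i.+1, 0 => lab 0 (tau_carry v i) (tau_flag v + i)
  | i.+1, j.+1 => lab 1 1 (tau_carry u j + i.+1)
  end.

Definition grid (n : nat) (u v : label) : pattern := fun i j =>
  mktile (edge n u v i.+1 j) (edge n v u j.+1 i) (edge n u v i j) (edge n v u j i).

Lemma grid_valid n u v w h : valid_pattern w h (grid n u v).
Proof. by []. Qed.

Lemma grid_right_labels n t : 0 < n -> inT' n t ->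
  right_labels (n.+1 - (BOTTOM t).1.1) (n.+1 - (LEFT t).1.1) (grid n (LEFT t) (BOTTOM t))
  = tau n (RIGHT t).
Proof.
(* With [n] a successor, [(n.+1 - v0).-1] computes for the concrete [v0] of each family. *)
case: n => // n _; case_inT'; rewrite tauE //= ?/inV; try (split; lia);
  rewrite ?subn0 ?subn1 /=; apply/eq_in_map => -[|j]; rewrite mem_iota /= => lt_j;
  rewrite /RIGHT /LEFT /grid /edge /tau_letter /tau_carry /tau_flag /=; f_equal; lia.
Qed.

Lemma grid_bottom_row_in n u v i : inV n u -> inV n v -> i < n.+1 - v.1.1 ->
  inT' n (grid n u v i 0).
Proof.
case: u => [[u0 u1] u2]; case: v => [[v0 v1] v2] [? ? ? ?] [? ? ? ?] /= lt_i.
case: i lt_i => [|i] lt_i; rewrite /grid /edge /tau_letter /=.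
- do 9 right; exists (v2 <= v0 + 0 : nat), (1 + v0 - v1), (u2 <= u0 + 0 : nat), (1 + u0 - u1).
  by split; [apply/okpairE; lia | apply/okpairE; lia | rewrite /lab !(addnC n) !addn0].
- rewrite addn1 (addnS (1 + v0 - v1)); apply: inT'_row_tile; lia.
Qed.

Lemma grid_right_bound n a u v w h j :
  right_labels w h (grid n u v) = tau n a -> j.+1 < h -> tau_carry u j + w <= n.+1.
Proof.
move=> Ra lt_j; have lt_j_a : j.+1 < size (tau n a) by rewrite -Ra size_map size_iota.
have := mem_tau_le (mem_nth (lab 0 0 0) lt_j_a).
rewrite -Ra (nth_map 0) ?size_iota // nth_iota //=; lia.
Qed.

Lemma grid_hat n u v i j : grid n u v i j = hat (grid n v u j i).
Proof. by []. Qed.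

Lemma grid_tiles_in n a b u v : inV n u -> inV n v ->
  right_labels (n.+1 - v.1.1) (n.+1 - u.1.1) (grid n u v) = tau n a ->
  right_labels (n.+1 - u.1.1) (n.+1 - v.1.1) (grid n v u) = tau n b ->
  tiles_in (inT' n) (n.+1 - v.1.1) (n.+1 - u.1.1) (grid n u v).
Proof.
move=> Vu Vv Ra Rb [|i] [|j] lt_i lt_j; try exact: grid_bottom_row_in.
  by rewrite grid_hat; apply/inT'_hat/grid_bottom_row_in.
have := grid_right_bound Ra lt_j; have := grid_right_bound Rb lt_i.
left; exists (tau_carry u j + i.+1), (tau_carry v i + j.+1).
by split; [lia | lia | rewrite /grid /= !addnS].
Qed.

Theorem lemma5p3 (n : nat) (alpha beta u v : label) :
  1 <= n ->
  inV n alpha -> inV n beta -> inV n u -> inV n v ->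
  inT' n (mktile alpha beta u v) ->
  exists w h (p : pattern),
    good_pattern n (tau n alpha) (tau n beta) (tau n u) (tau n v) w h p /\
    (forall w' h' (p' : pattern),
       good_pattern n (tau n alpha) (tau n beta) (tau n u) (tau n v) w' h' p' ->
       [/\ w' = w, h' = h &
           forall i j, i < w -> j < h -> p' i j = p i j]).
Proof.
move=> n_gt0 _ _ Vu Vv T.
have right_ok := grid_right_labels n_gt0 T.
have top_ok := grid_right_labels n_gt0 (inT'_hat T).
have good : good_pattern n (tau n alpha) (tau n beta) (tau n u) (tau n v)
    (n.+1 - v.1.1) (n.+1 - u.1.1) (grid n u v).
  split; [exact: grid_valid | exact: grid_tiles_in right_ok top_ok | exact: right_ok
         | exact: top_ok | by rewrite !tauE].
exists (n.+1 - v.1.1), (n.+1 - u.1.1), (grid n u v); split=> // w h p.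
exact: good_pattern_unique good.
Qed.
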